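(* Let $d\in\mathbb{N}$ and let $(A,B),(C,D)$ be pairs of complex $d\times d$ matrices with $\operatorname{diag}(A)=\operatorname{diag}(B)$ and $\operatorname{diag}(C)=\operatorname{diag}(D)$. Suppose that, for $i=1,2$, the linear maps $\Phi^{(i)}_{(A,B)}$ and $\Phi^{(i)}_{(C,D)}$ on $\mathcal{M}_d(\mathbb{C})$ are PPT. Then for all $i,j\in\{1,2\}$ the composition $\Phi^{(i)}_{(A,B)}\circ\Phi^{(j)}_{(C,D)}$ is entanglement breaking.
   Context: $\mathcal{M}_d(\mathbb{C})$ denotes the complex $d\times d$ matrices, $\odot$ the entrywise (Hadamard) product, $X^\top$ the transpose in the standard basis, $\operatorname{diag}(X)$ both the column vector of diagonal entries of $X$ (written $|\operatorname{diag}X\rangle$) and, for a vector $v$, $\operatorname{diag}(v)$ is the diagonal matrix with diagonal $v$; for a matrix $B$, $\operatorname{diag}B$ denotes the diagonal matrix with the same diagonal as $B$ and $\widetilde B=B-\operatorname{diag}B$. For a pair $(A,B)$ with equal diagonals, define $\Phi^{(1)}_{(A,B)}(X)=\operatorname{diag}(A|\operatorname{diag}X\rangle)+\widetilde B\odot X^\top$ and $\Phi^{(2)}_{(A,B)}(X)=\operatorname{diag}(A|\operatorname{diag}X\rangle)+\widetilde B\odot X$. A linear map $\Phi:\mathcal{M}_d(\mathbb{C})\to\mathcal{M}_d(\mathbb{C})$ is completely positive if $\mathrm{id}_n\otimes\Phi$ maps positive semidefinite matrices to positive semidefinite matrices for all $n$; completely copositive if $\Phi\circ\top$ is completely positive;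 PPT if it is both completely positive and completely copositive. $\Phi$ is entanglement breaking if $(\mathrm{id}\otimes\Phi)(X)$ is separable (in the convex hull of $P\otimes Q$ with $P,Q$ positive semidefinite) for every positive semidefinite $X\in\mathcal{M}_d(\mathbb{C})\otimes\mathcal{M}_d(\mathbb{C})$. *)

From HB Require Import structures.
From mathcomp Require Import all_boot all_order all_algebra.
From mathcomp Require Import reals.
From mathcomp Require Import complex mxtens.

Set Implicit Arguments.
Unset Strict Implicit.
Unset Printing Implicit Defensive.

Import Order.TTheory GRing.Theory Num.Theory.
Local Open Scope ring_scope.

Section QDefs.
Variable C : numClosedFieldType.

Definition adjmx m n (A : 'M[C]_(m, n)) : 'M[C]_(n, m) := (map_mx Num.conj A)^T.

Definition psdmx n (A : 'M[C]_n) : Prop :=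
  adjmx A = A /\ forall v : 'cV[C]_n, 0 <= (adjmx v *m A *m v) 0 0.

Definition hadamard m n (A B : 'M[C]_(m, n)) : 'M[C]_(m, n) :=
  \matrix_(i, j) (A i j * B i j).

Definition diagvec n (X : 'M[C]_n) : 'cV[C]_n := \col_i X i i.

Definition diagpart n (B : 'M[C]_n) : 'M[C]_n := diag_mx (diagvec B)^T.
Definition offdiag n (B : 'M[C]_n) : 'M[C]_n := B - diagpart B.

Definition Phi1 d (A B : 'M[C]_d) (X : 'M[C]_d) : 'M[C]_d :=
  diag_mx (A *m diagvec X)^T + hadamard (offdiag B) X^T.
Definition Phi2 d (A B : 'M[C]_d) (X : 'M[C]_d) : 'M[C]_d :=
  diag_mx (A *m diagvec X)^T + hadamard (offdiag B) X.

(* Phi^(i) for i : 'I_2, index 0 <-> Phi^(1), index 1 <-> Phi^(2) *)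
Definition PhiI d (k : 'I_2) (A B : 'M[C]_d) : 'M[C]_d -> 'M[C]_d :=
  if k == 0 then Phi1 A B else Phi2 A B.

(* id_n (x) Phi on M_n (x) M_d = M_(n*d) (Kronecker index convention of tensmx):
   sum_{a,b} E_ab (x) Phi(X_ab) where X_ab is the (a,b) block of X. *)
Definition blockmx n d (X : 'M[C]_(n * d)) (a b : 'I_n) : 'M[C]_d :=
  \matrix_(i, j) X (mxtens_index (a, i)) (mxtens_index (b, j)).

Definition idtens n d (Phi : 'M[C]_d -> 'M[C]_d) (X : 'M[C]_(n * d)) : 'M[C]_(n * d) :=
  \sum_(a < n) \sum_(b < n) (delta_mx a b *t Phi (blockmx X a b)).

Definition completely_positive d (Phi : 'M[C]_d -> 'M[C]_d) : Prop :=
  forall (n : nat) (X : 'M[C]_(n * d)), psdmx X -> psdmx (idtens Phi X).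

Definition completely_copositive d (Phi : 'M[C]_d -> 'M[C]_d) : Prop :=
  completely_positive (fun X => Phi X^T).

Definition PPT d (Phi : 'M[C]_d -> 'M[C]_d) : Prop :=
  completely_positive Phi /\ completely_copositive Phi.

(* separable: in the convex hull of {P (x) Q : P, Q psd}; since this set is a cone
   containing 0, the convex hull is the set of finite sums of such products. *)
Definition separable n m (X : 'M[C]_(n * m)) : Prop :=
  exists (k : nat) (P : 'I_k -> 'M[C]_n) (Q : 'I_k -> 'M[C]_m),
    (forall i, psdmx (P i)) /\ (forall i, psdmx (Q i)) /\
    X = \sum_(i < k) (P i *t Q i).

Definition entanglement_breaking d (Phi : 'M[C]_d -> 'M[C]_d) : Prop :=
  forall X : 'M[C]_(d * d), psdmx X -> separable (idtens Phi X).

End QDefs.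

(* The composition of two such maps is again of this form:
   it is Y |-> Phi^(2)_(AC, N)(Y) or Y |-> Phi^(2)_(AC, N)(Y^T), with N the
   entrywise product of B with D or D^T.  Through the Choi matrices, complete
   positivity of Phi^(1)_(A,B) and Phi^(2)_(A,B) gives A >= 0 entrywise, B
   hermitian off the diagonal and |B_kl|^2 <= min (A_kk A_ll) (A_kl A_lk).
   Under these conditions Phi^(2)_(AC, N) is a sum of measure-and-prepare maps
   Y |-> <f|Y|f> Q with Q psd, hence entanglement breaking: one such sum for
   every pair k <> l, acting on span {e_k, e_l} and obtained by averaging over
   the four phases i^r, plus a diagonal remainder whose coefficients are
   nonnegative because (AC)_pm >= A_pp C_pm and (AC)_pp >= sum_(l <> p) A_pl C_lp. *)

From HB Require Import structures.
From mathcomp Require Import all_boot all_order all_algebra.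
From mathcomp Require Import reals.
From mathcomp Require Import complex mxtens.
From mathcomp Require Import ring.

Set Implicit Arguments.
Unset Strict Implicit.
Unset Printing Implicit Defensive.

Import Order.TTheory GRing.Theory Num.Theory.
Local Open Scope ring_scope.

Section PsdMatrices.
Variable C : numClosedFieldType.

(* Rewriting with these rather than with the generic [rmorph*] lemmas keeps
   [Num.conj] in a form that [conjCK] can match. *)
Lemma conjCN (x : C) : (- x)^* = - x^*. Proof. exact: rmorphN. Qed.
Lemma conjCD (x y : C) : (x + y)^* = x^* + y^*. Proof. exact: rmorphD. Qed.
Lemma conjCM (x y : C) : (x * y)^* = x^* * y^*. Proof. exact: rmorphM. Qed.
Lemma conjCV (x : C) : (x^-1)^* = (x^*)^-1. Proof. exact: fmorphV. Qed.
Lemma conjCX (x : C) n : (x ^+ n)^* = x^* ^+ n. Proof. exact: rmorphXn. Qed.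

Lemma adjmxE m n (A : 'M[C]_(m, n)) i j : adjmx A i j = (A j i)^*.
Proof. by rewrite !mxE. Qed.

Lemma adjmxK m n (A : 'M[C]_(m, n)) : adjmx (adjmx A) = A.
Proof. by apply/matrixP=> i j; rewrite !adjmxE conjCK. Qed.

Lemma adjmxM m n p (A : 'M[C]_(m, n)) (B : 'M[C]_(n, p)) :
  adjmx (A *m B) = adjmx B *m adjmx A.
Proof. by rewrite /adjmx map_mxM trmx_mul. Qed.

Definition qform n (Y : 'M[C]_n) (f : 'cV[C]_n) : C := (adjmx f *m Y *m f) 0 0.

Definition ket n (k : 'I_n) : 'cV[C]_n := delta_mx k 0.

Lemma ketE n (k : 'I_n) i j : ket k i j = (i == k)%:R.
Proof. by rewrite mxE ord1 eqxx andbT. Qed.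

Lemma ket_outer n (k l : 'I_n) : ket k *m adjmx (ket l) = delta_mx k l.
Proof.
apply/matrixP=> i j; rewrite !mxE big_ord1 adjmxE !ketE rmorph_nat.
by rewrite -natrM mulnb.
Qed.

Lemma mx_outerE m n (u : 'cV[C]_m) (v : 'cV[C]_n) i j :
  (u *m adjmx v) i j = u i 0 * (v j 0)^*.
Proof. by rewrite mxE big_ord1 adjmxE. Qed.

Lemma adjmx_mul_mxE m n p (u : 'M[C]_(m, n)) (Y : 'M[C]_m) (v : 'M[C]_(m, p)) i j :
  (adjmx u *m Y *m v) i j = \sum_a \sum_b (u a i)^* * Y a b * v b j.
Proof.
rewrite mxE exchange_big; apply: eq_bigr => b _; rewrite mxE mulr_suml.
by apply: eq_bigr => a _; rewrite adjmxE.
Qed.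

Lemma adjmxD m n (A B : 'M[C]_(m, n)) : adjmx (A + B) = adjmx A + adjmx B.
Proof. by apply/matrixP => i j; rewrite !(adjmxE, mxE) rmorphD. Qed.

Lemma adjmxZ m n (x : C) (A : 'M[C]_(m, n)) : adjmx (x *: A) = x^* *: adjmx A.
Proof. by apply/matrixP => i j; rewrite !(adjmxE, mxE) rmorphM. Qed.

Lemma adjmx_mul_ketE n (Y : 'M[C]_n) k l : (adjmx (ket k) *m Y *m ket l) 0 0 = Y k l.
Proof.
rewrite adjmx_mul_mxE (bigD1 k) //= [X in _ + X]big1 => [|a ka]; last first.
  by rewrite big1 // => b _; rewrite ketE (negbTE ka) rmorph0 !mul0r.
rewrite addr0 (bigD1 l) //= [X in _ + X]big1 => [|b lb]; last first.
  by rewrite [ket l b 0]ketE (negbTE lb) mulr0.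
by rewrite !ketE !eqxx rmorph1 mul1r mulr1 addr0.
Qed.

Lemma qform_ket n (Y : 'M[C]_n) k : qform Y (ket k) = Y k k.
Proof. exact: adjmx_mul_ketE. Qed.

Lemma qform_ket2 n (Y : 'M[C]_n) k l x y :
  qform Y (x *: ket k + y *: ket l) =
  x^* * x * Y k k + x^* * y * Y k l + y^* * x * Y l k + y^* * y * Y l l.
Proof.
rewrite /qform adjmxD !adjmxZ !mulmxDl !mulmxDr -!scalemxAl -!scalemxAr.
rewrite ![((_ + _ : 'M_(1, 1)) _ _)]mxE ![((_ *: _ : 'M_(1, 1)) _ _)]mxE.
rewrite !adjmx_mul_ketE; ring.
Qed.

Lemma psdmx_herm n (M : 'M[C]_n) p q : psdmx M -> M q p = (M p q)^*.
Proof. by case=> hM _; rewrite -[in LHS]hM adjmxE. Qed.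

Lemma psdmx_diag_ge0 n (M : 'M[C]_n) p : psdmx M -> 0 <= M p p.
Proof. by case=> _ /(_ (ket p)); rewrite -/(qform _ _) qform_ket. Qed.

Lemma psdmx_minor2 n (M : 'M[C]_n) p q :
  psdmx M -> M p q * (M p q)^* <= M p p * M q q.
Proof.
move=> hM; have Q2 x y : 0 <= x^* * x * M p p + x^* * y * M p q
                             + y^* * x * (M p q)^* + y^* * y * M q q.
  by have [_ /(_ (x *: ket p + y *: ket q))] := hM; rewrite -psdmx_herm // -qform_ket2.
move: (psdmx_diag_ge0 p hM) (psdmx_diag_ge0 q hM) Q2.
move: (M p p) (M q q) (M p q) => a c b ha hc Q2; rewrite -subr_ge0.
have [ac0|ac0] := eqVneq (a + c) 0.
  have /andP[/eqP a0 /eqP c0] : (a == 0) && (c == 0) by rewrite -paddr_eq0 ?ac0.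
  have := Q2 1 (- b^*); rewrite a0 c0 conjCN conjCK rmorph1.
  rewrite (_ : _ + _ = - (b * b^* + b * b^*)); last by ring.
  rewrite oppr_ge0 mulr0 sub0r oppr_ge0 => h; apply: le_trans _ h.
  by rewrite lerDl mul_conjC_ge0.
have ac_gt0 : 0 < a + c by rewrite lt_def ac0 addr_ge0.
rewrite -(pmulr_rge0 _ ac_gt0).
have [ra rc] : a^* = a /\ c^* = c by rewrite !geC0_conj.
have := addr_ge0 (Q2 c (- b^*)) (Q2 (- b) a).
rewrite !conjCN conjCK ra rc; congr (_ <= _); ring.
Qed.

Lemma psdmx_congr m n (X : 'M[C]_m) (S : 'M[C]_(m, n)) :
  psdmx X -> psdmx (adjmx S *m X *m S).
Proof.
case=> hX hQ; split; first by rewrite !adjmxM adjmxK hX mulmxA.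
by move=> v; have := hQ (S *m v); rewrite adjmxM !mulmxA.
Qed.

Lemma psdmx_scalar1 (x : C) : 0 <= x -> psdmx (x%:M : 'M_1).
Proof.
move=> hx; split; first by apply/matrixP=> i j; rewrite adjmxE !ord1 !mxE geC0_conj.
move=> v; rewrite !mxE !big_ord1 !mxE !big_ord1 !mxE eqxx mulr1n.
by rewrite mulrAC mulr_ge0 // mulrC mul_conjC_ge0.
Qed.

Lemma psdmx_rank1 n (x : C) (g : 'cV[C]_n) : 0 <= x -> psdmx (x *: (g *m adjmx g)).
Proof.
move=> hx; have -> : x *: (g *m adjmx g) = adjmx (adjmx g) *m x%:M *m adjmx g.
  by rewrite adjmxK mul_mx_scalar scalemxAl.
exact/psdmx_congr/psdmx_scalar1.
Qed.

End PsdMatrices.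

Arguments ket {C n}.

Section MeasurePrepare.
Variable C : numClosedFieldType.

Definition measure_prepare d (Psi : 'M[C]_d -> 'M[C]_d) : Prop :=
  exists (I : finType) (f : I -> 'cV[C]_d) (Q : I -> 'M[C]_d),
    (forall x, psdmx (Q x)) /\ forall Y, Psi Y = \sum_x qform Y (f x) *: Q x.

Variable d : nat.
Implicit Types (Psi Phi : 'M[C]_d -> 'M[C]_d) (Y : 'M[C]_d).

Lemma measure_prepare_ext Psi Phi :
  (forall Y, Psi Y = Phi Y) -> measure_prepare Phi -> measure_prepare Psi.
Proof.
by move=> ePsi [I [f [Q [hQ ePhi]]]]; exists I, f, Q; split=> // Y; rewrite ePsi.
Qed.

Lemma measure_prepare_rank1 (f : 'cV[C]_d) (Q : 'M[C]_d) :
  psdmx Q -> measure_prepare (fun Y => qform Y f *: Q).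
Proof. by move=> hQ; exists 'I_1, (fun=> f), (fun=> Q); split=> // Y; rewrite big_ord1. Qed.

Lemma measure_prepare0 : measure_prepare (fun _ : 'M[C]_d => 0).
Proof.
by exists 'I_0, (fun=> 0), (fun=> 0 : 'M_d); split=> [[]|Y]; rewrite ?big_ord0.
Qed.

Lemma measure_prepareD Psi Phi : measure_prepare Psi -> measure_prepare Phi ->
  measure_prepare (fun Y => Psi Y + Phi Y).
Proof.
move=> [I [f [Q [hQ ePsi]]]] [J [g [R [hR ePhi]]]].
exists (I + J)%type, (fun x => match x with inl i => f i | inr j => g j end).
exists (fun x => match x with inl i => Q i | inr j => R j end).
by split=> [[]|Y] //; rewrite big_sumType ePsi ePhi.
Qed.

Lemma measure_prepare_sum (I : Type) (r : seq I) (P : pred I)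
    (F : I -> 'M[C]_d -> 'M[C]_d) :
  (forall i, P i -> measure_prepare (F i)) ->
  measure_prepare (fun Y => \sum_(i <- r | P i) F i Y).
Proof.
move=> hF; elim: r => [|i r IHr].
  by apply: measure_prepare_ext measure_prepare0 => Y; rewrite big_nil.
case Pi: (P i).
  apply: measure_prepare_ext (measure_prepareD (hF i Pi) IHr) => Y.
  by rewrite big_cons Pi.
by apply: measure_prepare_ext IHr => Y; rewrite big_cons Pi.
Qed.

Lemma qform_trmx (Y : 'M[C]_d) f : qform Y^T f = qform Y (map_mx Num.conj f).
Proof.
rewrite /qform !adjmx_mul_mxE [RHS]exchange_big; apply: eq_bigr => a _.
by apply: eq_bigr => b _; rewrite !mxE conjCK; ring.
Qed.

Lemma measure_prepare_trmx Psi :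
  measure_prepare Psi -> measure_prepare (fun Y => Psi Y^T).
Proof.
move=> [I [f [Q [hQ ePsi]]]]; exists I, (fun x => map_mx Num.conj (f x)), Q.
by split=> // Y; rewrite ePsi; apply: eq_bigr => x _; rewrite qform_trmx.
Qed.

End MeasurePrepare.

Section Separability.
Variable C : numClosedFieldType.

Lemma separable_sum n m (I : finType) (P : I -> 'M[C]_n) (Q : I -> 'M[C]_m) :
  (forall i, psdmx (P i)) -> (forall i, psdmx (Q i)) ->
  separable (\sum_i (P i *t Q i)).
Proof.
move=> hP hQ; exists #|I|, (P \o enum_val), (Q \o enum_val).
split=> [i|]; first exact: hP.
split=> [i|]; first exact: hQ.
by rewrite (big_enum_val (fun i => P i *t Q i)).
Qed.

Lemma sum_mxtens_index m n (G : 'I_(m * n) -> C) :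
  \sum_p G p = \sum_(a < m) \sum_(i < n) G (mxtens_index (a, i)).
Proof.
rewrite pair_big /= (reindex (@mxtens_index m n)) /=; first by apply: eq_bigr => -[].
by exists (@mxtens_unindex m n) => p _; rewrite (mxtens_indexK, mxtens_unindexK).
Qed.

Lemma idtensE n d (Phi : 'M[C]_d -> 'M[C]_d) (X : 'M[C]_(n * d)) a i b j :
  idtens Phi X (mxtens_index (a, i)) (mxtens_index (b, j)) = Phi (blockmx X a b) i j.
Proof.
rewrite /idtens summxE (bigD1 a) //= [X in _ + X]big1 => [|a' a'a]; last first.
  by rewrite summxE big1 // => b' _; rewrite tensmxE mxE eq_sym (negbTE a'a) mul0r.
rewrite addr0 summxE (bigD1 b) //= [X in _ + X]big1 => [|b' b'b]; last first.
  by rewrite tensmxE mxE eqxx [b == b']eq_sym (negbTE b'b) mul0r.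
by rewrite addr0 tensmxE mxE !eqxx mul1r.
Qed.

Definition id_tens_col n d (f : 'cV[C]_d) : 'M[C]_(n * d, n) :=
  \matrix_(p, a) (((mxtens_unindex p).1 == a)%:R * f (mxtens_unindex p).2 0).

Lemma id_tens_col_bilinear n d (f : 'cV[C]_d) (X : 'M[C]_(n * d)) a b :
  (adjmx (id_tens_col n f) *m X *m id_tens_col n f) a b = qform (blockmx X a b) f.
Proof.
have L_E a' i c : id_tens_col n f (mxtens_index (a', i)) c = (a' == c)%:R * f i 0.
  by rewrite mxE mxtens_indexK.
rewrite /qform !adjmx_mul_mxE sum_mxtens_index (bigD1 a) //= [X in _ + X]big1.
  rewrite addr0; apply: eq_bigr => i _; rewrite sum_mxtens_index (bigD1 b) //=.
  rewrite [X in _ + X]big1 ?addr0 => [|b' b'b]; last first.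
    by apply: big1 => j _; rewrite !L_E (negbTE b'b) mul0r mulr0.
  by apply: eq_bigr => j _; rewrite !L_E mxE !eqxx !mul1r.
move=> a' a'a; apply: big1 => i _; apply: big1 => q _.
by rewrite L_E (negbTE a'a) mul0r rmorph0 !mul0r.
Qed.

Lemma measure_prepare_idtens_separable d (Psi : 'M[C]_d -> 'M[C]_d) n
    (X : 'M[C]_(n * d)) :
  measure_prepare Psi -> psdmx X -> separable (idtens Psi X).
Proof.
move=> [I [f [Q [hQ ePsi]]]] hX.
have -> : idtens Psi X =
    \sum_x ((adjmx (id_tens_col n (f x)) *m X *m id_tens_col n (f x)) *t Q x).
  apply/matrixP => p q; rewrite -[p]mxtens_unindexK -[q]mxtens_unindexK.
  case: (mxtens_unindex p) (mxtens_unindex q) => [a i] [b j].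
  rewrite idtensE ePsi !summxE; apply: eq_bigr => x _.
  by rewrite tensmxE id_tens_col_bilinear mxE.
by apply: separable_sum => // x; apply: psdmx_congr.
Qed.

Lemma measure_prepare_EB d (Psi : 'M[C]_d -> 'M[C]_d) :
  measure_prepare Psi -> entanglement_breaking Psi.
Proof. by move=> hPsi X; apply: measure_prepare_idtens_separable. Qed.

End Separability.

Section CovariantMaps.
Variables (C : numClosedFieldType) (d : nat).
Implicit Types (A B X : 'M[C]_d).

Lemma Phi2E A B X i j :
  Phi2 A B X i j = if i == j then \sum_m A i m * X m m else B i j * X i j.
Proof.
rewrite !mxE; case: eqVneq => [->|ij].
  by rewrite mulr1n subrr mul0r addr0; apply: eq_bigr => m _; rewrite !mxE.
by rewrite /= !mulr0n add0r subr0.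
Qed.

Lemma Phi1_Phi2 A B X : Phi1 A B X = Phi2 A B X^T.
Proof.
by rewrite /Phi1 /Phi2; congr (diag_mx (A *m _)^T + _); apply/matrixP=> i j; rewrite !mxE.
Qed.

Lemma trmx_Phi2 A B X : (Phi2 A B X)^T = Phi2 A B^T X^T.
Proof.
apply/matrixP=> i j; rewrite mxE !Phi2E eq_sym; case: eqVneq => [->|_]; last by rewrite !mxE.
by apply: eq_bigr => m _; rewrite mxE.
Qed.

Lemma Phi2_comp A B C' D X :
  Phi2 A B (Phi2 C' D X) = Phi2 (A *m C') (hadamard B D) X.
Proof.
apply/matrixP=> i j; rewrite !Phi2E; case: eqVneq => [_|ij]; last first.
  by rewrite mxE mulrA.
under eq_bigr => m _ do rewrite Phi2E eqxx mulr_sumr.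
rewrite exchange_big; apply: eq_bigr => n _; rewrite mxE mulr_suml.
by apply: eq_bigr => m _; rewrite mulrA.
Qed.

Definition choi (Phi : 'M[C]_d -> 'M[C]_d) : 'M[C]_(d * d) :=
  \matrix_(p, q) Phi (delta_mx (mxtens_unindex p).1 (mxtens_unindex q).1)
                     (mxtens_unindex p).2 (mxtens_unindex q).2.

Lemma choiE (Phi : 'M[C]_d -> 'M[C]_d) a i b j :
  choi Phi (mxtens_index (a, i)) (mxtens_index (b, j)) = Phi (delta_mx a b) i j.
Proof. by rewrite mxE !mxtens_indexK. Qed.

Lemma choi_psd (Phi : 'M[C]_d -> 'M[C]_d) :
  completely_positive Phi -> psdmx (choi Phi).
Proof.
pose w : 'cV[C]_(d * d) := \col_p (((mxtens_unindex p).1 == (mxtens_unindex p).2)%:R).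
move=> /(_ d (w *m adjmx w)); rewrite -[w *m _]scale1r => /(_ (psdmx_rank1 _ ler01)).
congr psdmx; apply/matrixP => p q; rewrite -[p]mxtens_unindexK -[q]mxtens_unindexK.
case: (mxtens_unindex p) (mxtens_unindex q) => [a i] [b j].
rewrite idtensE choiE; congr (Phi _ i j); apply/matrixP => i' j'.
rewrite !mxE big_ord1 !mxE !mxtens_indexK /= conjC_nat mul1r -natrM mulnb.
by rewrite [i' == a]eq_sym [j' == b]eq_sym.
Qed.

Definition ppt_pair A B : Prop :=
  [/\ forall i j, 0 <= A i j,
      forall i j, i != j -> B j i = (B i j)^*,
      forall i j, i != j -> B i j * (B i j)^* <= A i i * A j j
    & forall i j, i != j -> B i j * (B i j)^* <= A i j * A j i].

Lemma Phi2_delta_diag A B a i : Phi2 A B (delta_mx a a) i i = A i a.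
Proof.
rewrite Phi2E eqxx (bigD1 a) //= big1 => [|m ma]; last by rewrite mxE andbb (negbTE ma) mulr0.
by rewrite mxE !eqxx mulr1 addr0.
Qed.

Lemma Phi2_delta_offdiag A B a b : a != b -> Phi2 A B (delta_mx a b) a b = B a b.
Proof. by move=> ab; rewrite Phi2E (negbTE ab) mxE !eqxx mulr1. Qed.

Lemma ppt_pair_of_cp A B :
  completely_positive (Phi1 A B) -> completely_positive (Phi2 A B) -> ppt_pair A B.
Proof.
move=> /choi_psd cp1 /choi_psd cp2.
have choi1E a i b j : choi (Phi1 A B) (mxtens_index (a, i)) (mxtens_index (b, j))
                      = Phi2 A B (delta_mx b a) i j.
  by rewrite choiE Phi1_Phi2 trmx_delta.
split=> [i j|i j ij|i j ij|i j ij].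
- by have := psdmx_diag_ge0 (mxtens_index (j, i)) cp2; rewrite choiE Phi2_delta_diag.
- have := psdmx_herm (mxtens_index (i, i)) (mxtens_index (j, j)) cp2.
  by rewrite !choiE !Phi2_delta_offdiag // eq_sym.
- have := psdmx_minor2 (mxtens_index (i, i)) (mxtens_index (j, j)) cp2.
  by rewrite !choiE Phi2_delta_offdiag // !Phi2_delta_diag.
- have := psdmx_minor2 (mxtens_index (j, i)) (mxtens_index (i, j)) cp1.
  by rewrite !choi1E Phi2_delta_offdiag // !Phi2_delta_diag.
Qed.

Lemma ppt_pair_trmx A B : ppt_pair A B -> ppt_pair A B^T.
Proof.
case=> A0 herm minA minB; split=> // i j; rewrite eq_sym => ji; rewrite !mxE.
- exact: herm.
- by rewrite [A i i * _]mulrC; apply: minA.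
- by rewrite [A i j * _]mulrC; apply: minB.
Qed.

End CovariantMaps.

Section PairMaps.
Variables (C : numClosedFieldType) (d : nat).
Implicit Types (Y : 'M[C]_d).

Definition phase (r : 'I_4) : C := 'i ^+ r.

Lemma phase_neq0 r : phase r != 0.
Proof. by rewrite expf_neq0 // neq0Ci. Qed.

Lemma phase_conj r : (phase r)^* = (phase r)^-1.
Proof. by rewrite /phase conjCX conjCi -invCi exprVn. Qed.

(* Averaging over the fourth roots of unity kills every monomial [w ^+ m] with
   [m] not divisible by 4, here [m = 1, 2, 3]. *)
Lemma sum_phase (c0 c1 c2 d0 d1 d2 : C) :
  \sum_r (c0 + phase r * c1 + (phase r)^-1 * c2) * (d0 + (phase r)^-1 * d1 + phase r * d2)
  = 4 * (c0 * d0 + c1 * d1 + c2 * d2).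
Proof.
rewrite !big_ord_recl big_ord0 /phase /=.
have i3 : 'i ^+ 3 = - 'i :> C by rewrite exprS sqrCi mulrN1.
rewrite expr0 expr1 sqrCi i3 invr1 invCi invrN1 invrN invCi opprK.
transitivity (4 * (c0 * d0 + c1 * d1 + c2 * d2) + 2 * ('i * 'i + 1) * (c1 - c2) * (d2 - d1)).
  by ring.
by rewrite mulCii addNr mulr0 !mul0r addr0.
Qed.

Definition pair_map (k l : 'I_d) (a b c e n : C) Y : 'M[C]_d :=
  (a * Y k k + b * Y l l) *: delta_mx k k + (c * Y k k + e * Y l l) *: delta_mx l l
  + (n * Y k l) *: delta_mx k l + (n^* * Y l k) *: delta_mx l k.

Variables (k l : 'I_d).

Definition pair_meas (x y : C) r : 'cV[C]_d := x *: ket k + (phase r * y) *: ket l.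
Definition pair_prep (z : C) r : 'cV[C]_d := ket k + (phase r * z^*) *: ket l.

Lemma pair_map_phase_average (x y z : C) Y : 0 <= x -> 0 <= y ->
  pair_map k l (x ^+ 2) (y ^+ 2) (z * z^* * x ^+ 2) (z * z^* * y ^+ 2) (x * y * z) Y =
  \sum_r qform Y (pair_meas x y r) *: (4^-1 *: (pair_prep z r *m adjmx (pair_prep z r))).
Proof.
move=> x0 y0; have [rx ry] : x^* = x /\ y^* = y by rewrite !geC0_conj.
have scaleE m n c (M : 'M[C]_(m, n)) i j : (c *: M) i j = c * M i j by rewrite mxE.
have addE m n (M N : 'M[C]_(m, n)) i j : (M + N) i j = M i j + N i j by rewrite mxE.
apply/matrixP => p q; rewrite summxE.
pose d0 := (p == k)%:R * (q == k)%:R + z * z^* * ((p == l)%:R * (q == l)%:R).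
pose d1 := z * ((p == k)%:R * (q == l)%:R).
pose d2 := z^* * ((p == l)%:R * (q == k)%:R).
transitivity (\sum_r 4^-1 * ((x ^+ 2 * Y k k + y ^+ 2 * Y l l + phase r * (x * y * Y k l)
    + (phase r)^-1 * (x * y * Y l k)) * (d0 + (phase r)^-1 * d1 + phase r * d2))); last first.
  apply: eq_bigr => r _.
  rewrite qform_ket2 !scaleE mx_outerE !addE !scaleE !ketE.
  rewrite !(conjCD, conjCM) !conjC_nat conjCK rx ry phase_conj /d0 /d1 /d2.
  by move: (phase r) (phase_neq0 r) => w w0; field.
rewrite -mulr_sumr sum_phase mulKf ?pnatr_eq0 // /d0 /d1 /d2.
rewrite /pair_map !addE !scaleE !mxE -!mulnb !natrM !(conjCM) rx ry; ring.
Qed.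

Lemma measure_prepare_diag_entry (p m : 'I_d) (s : C) :
  0 <= s -> measure_prepare (fun Y => (s * Y m m) *: delta_mx p p).
Proof.
move=> s0; apply: measure_prepare_ext (measure_prepare_rank1 (ket m) (psdmx_rank1 (ket p) s0)).
by move=> Y; rewrite qform_ket ket_outer scalerA mulrC.
Qed.

Lemma measure_prepare_pair_map_extremal (x y z : C) : 0 <= x -> 0 <= y ->
  measure_prepare
    (pair_map k l (x ^+ 2) (y ^+ 2) (z * z^* * x ^+ 2) (z * z^* * y ^+ 2) (x * y * z)).
Proof.
move=> x0 y0; apply: measure_prepare_ext (fun Y => pair_map_phase_average z Y x0 y0) _.
apply: measure_prepare_sum => r _; apply/measure_prepare_rank1/psdmx_rank1.
by rewrite invr_ge0 ler0n.
Qed.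

Lemma measure_prepare_pair_map (a b c e n : C) :
  0 <= a -> 0 <= b -> 0 <= c -> 0 <= e ->
  n * n^* <= a * e -> n * n^* <= b * c -> measure_prepare (pair_map k l a b c e n).
Proof.
move=> a0 b0 c0 e0 n_ae n_bc.
(* If [x * y = 0] the hypotheses force [n = 0], and [n / 0 = 0] gives [z = 0]. *)
pose x := sqrtC a; pose y := sqrtC b; pose z := n / (x * y).
have [x0 y0] : 0 <= x /\ 0 <= y by rewrite !sqrtC_ge0.
have [xa yb] : x ^+ 2 = a /\ y ^+ 2 = b by rewrite !sqrtCK.
have [rx ry] : x^* = x /\ y^* = y by rewrite !geC0_conj.
have n0 : a * b = 0 -> n = 0.
  move/eqP; rewrite mulf_eq0 => /orP[]/eqP ab0; apply/eqP;
    rewrite -mul_conjC_eq0 eq_le mul_conjC_ge0 andbT.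
  - by move: n_ae; rewrite ab0 mul0r.
  - by move: n_bc; rewrite ab0 mul0r.
have xyz : x * y * z = n.
  have [xy0|xy0] := eqVneq (x * y) 0; last by rewrite mulrC divfK.
  by rewrite xy0 mul0r n0 // -xa -yb -exprMn xy0 expr0n.
have zz_le s t u : 0 <= t -> 0 <= u -> (t = 0 -> z = 0) ->
    z * z^* * (s * t) = n * n^* -> n * n^* <= t * u -> z * z^* * s <= u.
  move=> t0 u0 z0 zz_st n_tu; have [/z0->|t_neq0] := eqVneq t 0; first by rewrite !mul0r.
  have t_gt0 : 0 < t by rewrite lt_def t_neq0.
  by rewrite -(ler_pM2r t_gt0) -[z * z^* * s * t]mulrA zz_st [u * t]mulrC.
have zz_ab : z * z^* * (a * b) = n * n^*.
  by rewrite -xyz !conjCM rx ry -xa -yb; ring.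
have zc : z * z^* * a <= c.
  by apply: zz_le zz_ab n_bc => // b_0; rewrite /z /y b_0 sqrtC0 mulr0 invr0 mulr0.
have ze : z * z^* * b <= e.
  apply: zz_le n_ae => //; last by rewrite [b * a]mulrC.
  by move=> a_0; rewrite /z /x a_0 sqrtC0 mul0r invr0 mulr0.
apply: (measure_prepare_ext (Phi := fun Y =>
    pair_map k l (x ^+ 2) (y ^+ 2) (z * z^* * x ^+ 2) (z * z^* * y ^+ 2) (x * y * z) Y
    + ((c - z * z^* * a) * Y k k) *: delta_mx l l
    + ((e - z * z^* * b) * Y l l) *: delta_mx l l)).
  by move=> Y; rewrite xa yb xyz /pair_map; apply/matrixP => p q; rewrite !mxE; ring.
apply: measure_prepareD; last by apply: measure_prepare_diag_entry; rewrite subr_ge0.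
apply: measure_prepareD; last by apply: measure_prepare_diag_entry; rewrite subr_ge0.
exact: measure_prepare_pair_map_extremal.
Qed.

End PairMaps.

Section PairDecomposition.
Variables (C : numClosedFieldType) (d : nat).
Implicit Types (Y M N : 'M[C]_d) (F : 'I_d -> 'I_d -> C).

Lemma sum_offdiag_swap (G : 'I_d -> 'I_d -> 'M[C]_d) :
  \sum_k \sum_(l | l != k) G k l = \sum_l \sum_(k | k != l) G k l.
Proof.
rewrite (exchange_big_dep predT) //; apply: eq_bigr => l _.
by apply: eq_bigl => k; rewrite eq_sym.
Qed.

Lemma sum_scale_delta_diagE (G : 'I_d -> C) p q :
  (\sum_i G i *: delta_mx i i) p q = (p == q)%:R * G p.
Proof.
have -> : \sum_i G i *: delta_mx i i = diag_mx (\row_i G i).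
  by rewrite diag_mx_sum_delta; apply: eq_bigr => i _; rewrite mxE.
by rewrite !mxE mulr_natl; case: eqVneq => [->|].
Qed.

Lemma sum_offdiag_scale_deltaE F p q :
  (\sum_k \sum_(l | l != k) F k l *: delta_mx k l) p q = (p != q)%:R * F p q.
Proof.
rewrite summxE (bigD1 p) //= [X in _ + X]big1 ?addr0 => [|k kp]; last first.
  by rewrite summxE big1 // => l _; rewrite mxE mxE [p == k]eq_sym (negbTE kp) mulr0.
rewrite summxE; have [<-|pq] := eqVneq p q.
  by rewrite big1 ?mul0r // => l lp; rewrite !mxE eqxx [p == l]eq_sym (negbTE lp) mulr0.
rewrite (bigD1 q) 1?eq_sym //= [X in _ + X]big1 ?addr0 => [|l /andP[_ lq]]; last first.
  by rewrite !mxE [q == l]eq_sym (negbTE lq) andbF mulr0.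
by rewrite !mxE !eqxx mulr1 mul1r.
Qed.

Lemma sum_offdiag_scale_deltaTE F p q :
  (\sum_k \sum_(l | l != k) F k l *: delta_mx l k) p q = (p != q)%:R * F q p.
Proof.
by rewrite (sum_offdiag_swap (fun k l => F k l *: delta_mx l k)) sum_offdiag_scale_deltaE.
Qed.

Lemma sum_offdiag_scale_delta_diagE F p q :
  (\sum_k \sum_(l | l != k) F k l *: delta_mx k k) p q = (p == q)%:R * \sum_(l | l != p) F p l.
Proof. by under eq_bigr do rewrite -scaler_suml; rewrite sum_scale_delta_diagE. Qed.

Lemma sum_offdiag_scale_delta_diagTE F p q :
  (\sum_k \sum_(l | l != k) F k l *: delta_mx l l) p q = (p == q)%:R * \sum_(k | k != p) F k p.
Proof.
rewrite (sum_offdiag_swap (fun k l => F k l *: delta_mx l l)).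
by under eq_bigr do rewrite -scaler_suml; rewrite sum_scale_delta_diagE.
Qed.

Definition pair_coef (a b c e : 'I_d -> 'I_d -> C) p m : C :=
  if m == p then \sum_(l | l != p) (a p l + e l p) else b p m + c m p.

Lemma sum_pair_mapE (a b c e n : 'I_d -> 'I_d -> C) Y p q :
  (\sum_k \sum_(l | l != k) pair_map k l (a k l) (b k l) (c k l) (e k l) (n k l) Y) p q =
  if p == q then \sum_m pair_coef a b c e p m * Y m m
  else n p q * Y p q + (n q p)^* * Y p q.
Proof.
rewrite /pair_map; under eq_bigr => k _ do rewrite !big_split /=.
rewrite !big_split /= !mxE sum_offdiag_scale_deltaE sum_offdiag_scale_deltaTE.
rewrite sum_offdiag_scale_delta_diagE sum_offdiag_scale_delta_diagTE.
case: eqVneq => [<-|_]; last by rewrite !mul0r !add0r !mul1r.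
rewrite !mul0r !addr0 !mul1r [RHS](bigD1 p) //= /pair_coef eqxx.
rewrite [X in _ = _ + X](eq_bigr (fun m => b p m * Y m m + c m p * Y m m)); last first.
  by move=> m /negbTE ->; rewrite mulrDl.
rewrite mulr_suml; under [X in _ = X + _]eq_bigr do rewrite mulrDl.
rewrite !big_split /=; ring.
Qed.

(* Both (k, l) and (l, k) contribute to the entry (k, l), hence [N k l / 2]. *)
Lemma Phi2_pair_decomposition M N (a b c e : 'I_d -> 'I_d -> C) Y :
  (forall k l, k != l -> N l k = (N k l)^*) ->
  Phi2 M N Y =
    \sum_k \sum_(l | l != k) pair_map k l (a k l) (b k l) (c k l) (e k l) (N k l / 2) Y
    + \sum_p \sum_m ((M p m - pair_coef a b c e p m) * Y m m) *: delta_mx p p.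
Proof.
move=> hN; apply/matrixP => p q; rewrite Phi2E mxE sum_pair_mapE.
under [in X in _ + X]eq_bigr do rewrite -scaler_suml.
rewrite sum_scale_delta_diagE; have [->|pq] := eqVneq p q.
  by rewrite mul1r -big_split; apply: eq_bigr => m _ /=; rewrite -mulrDl addrC subrK.
rewrite /= mulr0n mul0r addr0 hN 1?eq_sym //.
by rewrite conjCM conjCV conjC_nat -mulrDl -splitr.
Qed.

Lemma measure_prepare_Phi2 M N (a b c e : 'I_d -> 'I_d -> C) :
  (forall k l, k != l -> N l k = (N k l)^*) ->
  (forall k l, [/\ 0 <= a k l, 0 <= b k l, 0 <= c k l & 0 <= e k l]) ->
  (forall k l, k != l -> N k l * (N k l)^* <= 4 * (a k l * e k l)) ->
  (forall k l, k != l -> N k l * (N k l)^* <= 4 * (b k l * c k l)) ->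
  (forall p m, pair_coef a b c e p m <= M p m) ->
  measure_prepare (Phi2 M N).
Proof.
move=> hN w0 hae hbc hM.
apply: measure_prepare_ext (fun Y => Phi2_pair_decomposition M a b c e Y hN) _.
have half_sq k l s : N k l * (N k l)^* <= 4 * s -> N k l / 2 * (N k l / 2)^* <= s.
  rewrite conjCM conjCV conjC_nat mulrACA -invfM -natrM.
  by move=> h; rewrite ler_pdivrMr ?ltr0n // [s * _]mulrC.
refine (measure_prepareD _ _); apply: measure_prepare_sum => k _;
  apply: measure_prepare_sum => l lk.
- have [a0 b0 c0 e0] := w0 k l; rewrite eq_sym in lk.
  by apply: measure_prepare_pair_map => //; apply: half_sq; [apply: hae | apply: hbc].
- by apply: measure_prepare_diag_entry; rewrite subr_ge0.
Qed.

End PairDecomposition.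

Section Composition.
Variables (C : numClosedFieldType) (d : nat).
Implicit Types (Y : 'M[C]_d).

Lemma PhiI0 (A B : 'M[C]_d) : PhiI 0 A B = Phi1 A B. Proof. by []. Qed.
Lemma PhiI1 (A B : 'M[C]_d) : PhiI 1 A B = Phi2 A B. Proof. by []. Qed.

Lemma PhiI_comp (i j : 'I_2) (A B C' D : 'M[C]_d) Y :
  (PhiI i A B \o PhiI j C' D) Y =
  Phi2 (A *m C') (hadamard B (if i == 0 then D^T else D)) (if i == j then Y else Y^T).
Proof.
rewrite /PhiI /=; case: i j => [[|[|//]] ?] [[|[|//]] ?] /=.
all: by rewrite ?Phi1_Phi2 ?trmx_Phi2 ?trmxK Phi2_comp.
Qed.

Lemma measure_prepare_Phi2_comp (A B C' D : 'M[C]_d) :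
  ppt_pair A B -> ppt_pair C' D -> measure_prepare (Phi2 (A *m C') (hadamard B D)).
Proof.
move=> [A0 hB hBd hBo] [C0 hD _ hDo].
apply: (measure_prepare_Phi2 (a := fun k l => A k l * C' l k / 2)
  (b := fun k l => A k k * C' k l / 2) (c := fun k l => A l l * C' l k / 2)
  (e := fun k l => A l k * C' k l / 2)).
- by move=> k l kl; rewrite !mxE hB // hD // conjCM.
- by move=> k l; split; rewrite divr_ge0 ?mulr_ge0.
- move=> k l kl; rewrite mxE conjCM mulrACA.
  rewrite (_ : 4 * _ = A k l * A l k * (C' k l * C' l k)); last by field.
  by apply: ler_pM; rewrite ?mul_conjC_ge0 ?hBo ?hDo.
- move=> k l kl; rewrite mxE conjCM mulrACA.
  rewrite (_ : 4 * _ = A k k * A l l * (C' k l * C' l k)); last by field.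
  by apply: ler_pM; rewrite ?mul_conjC_ge0 ?hBd ?hDo.
move=> p m; rewrite /pair_coef mxE; have [->|mp] := eqVneq m p.
  rewrite [leRHS](bigD1 p) //= ler_wpDl ?mulr_ge0 //.
  by apply: ler_sum => l _; rewrite -splitr.
rewrite -splitr (bigD1 p) //= lerDl.
by apply: sumr_ge0 => n _; rewrite mulr_ge0.
Qed.

End Composition.

Unset Implicit Arguments.

Theorem theorem4p5 (R : realType) (d : nat) (A B C D : 'M[R[i]]_d) :
  (forall k : 'I_d, A k k = B k k) ->
  (forall k : 'I_d, C k k = D k k) ->
  (forall k : 'I_2, PPT (PhiI k A B) /\ PPT (PhiI k C D)) ->
  forall i j : 'I_2, entanglement_breaking (PhiI i A B \o PhiI j C D).
Proof.
move=> _ _ hppt i j.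
have [[cpAB1 _] [cpCD1 _]] := hppt 0; have [[cpAB2 _] [cpCD2 _]] := hppt 1.
rewrite PhiI0 in cpAB1 cpCD1; rewrite PhiI1 in cpAB2 cpCD2.
have hCD := ppt_pair_of_cp cpCD1 cpCD2.
have hCD' : ppt_pair C (if i == 0 then D^T else D).
  by case: (i == 0); [exact: ppt_pair_trmx | exact: hCD].
have hPsi := measure_prepare_Phi2_comp (ppt_pair_of_cp cpAB1 cpAB2) hCD'.
apply: measure_prepare_EB; apply: measure_prepare_ext (PhiI_comp i j A B C D) _.
by case: (i == j) => /=; [exact: hPsi | exact: measure_prepare_trmx hPsi].
Qed.
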